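(* For all integers $n \geq 3$ and $r \geq 3$, the graphs $K_n$ and $K_n + K_{n-1}$ are $r$-Ramsey equivalent; that is, a graph $G$ has the property that every edge-colouring of $G$ with $r$ colours contains a monochromatic copy of $K_n$ if and only if every edge-colouring of $G$ with $r$ colours contains a monochromatic copy of $K_n + K_{n-1}$.
   Context: All graphs are finite and simple. $K_m$ denotes the complete graph on $m$ vertices, and $K_n + K_{n-1}$ denotes the vertex-disjoint union of a copy of $K_n$ and a copy of $K_{n-1}$. For an integer $r \geq 2$, a graph $G$ is an $r$-Ramsey graph for a graph $H$ if every colouring of the edges of $G$ with $r$ colours admits a monochromatic copy of $H$ (a copy of $H$ as a subgraph of $G$ all of whose edges receive the same colour). Two graphs $H_1, H_2$ are $r$-Ramsey equivalent if every $r$-Ramsey graph for $H_1$ is an $r$-Ramsey graph for $H_2$, and vice versa. *)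

From mathcomp Require Import all_boot.
Set Implicit Arguments. Unset Strict Implicit. Unset Printing Implicit Defensive.

Record sgraph := SGraph {
  svert : finType;
  sadj : rel svert;
  sadj_sym : symmetric sadj;
  sadj_irr : irreflexive sadj }.

(* An r-edge-colouring of G: a symmetric colour assignment to pairs of vertices;
   only its values on edges matter. *)
Definition edge_colouring (G : sgraph) (r : nat) :=
  { c : svert G -> svert G -> 'I_r | forall x y, c x y = c y x }.

Definition mono_copy (H G : sgraph) (r : nat) (c : edge_colouring G r) : Prop :=
  exists (k : 'I_r) (f : svert H -> svert G), injective f /\
    forall a b, sadj a b -> sadj (f a) (f b) /\ sval c (f a) (f b) = k.

Definition ramsey (G H : sgraph) (r : nat) : Prop :=
  forall c : edge_colouring G r, mono_copy H c.

Definition ramsey_equiv (H1 H2 : sgraph) (r : nat) : Prop :=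
  forall G : sgraph, ramsey G H1 r <-> ramsey G H2 r.

Definition Kadj (m : nat) : rel 'I_m := fun x y => x != y.
Lemma Kadj_sym m : symmetric (Kadj (m:=m)).
Proof. by move=> x y; rewrite /Kadj eq_sym. Qed.
Lemma Kadj_irr m : irreflexive (Kadj (m:=m)).
Proof. by move=> x; rewrite /Kadj eqxx. Qed.
Definition K (m : nat) : sgraph := SGraph (@Kadj_sym m) (@Kadj_irr m).

Definition uadj (G1 G2 : sgraph) : rel (svert G1 + svert G2) :=
  fun x y => match x, y with
             | inl a, inl b => sadj a b
             | inr a, inr b => sadj a b
             | _, _ => false end.
Lemma uadj_sym G1 G2 : symmetric (@uadj G1 G2).
Proof. by case=> a [] b //=; apply: sadj_sym. Qed.
Lemma uadj_irr G1 G2 : irreflexive (@uadj G1 G2).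
Proof. by case=> a /=; apply: sadj_irr. Qed.
Definition gunion (G1 G2 : sgraph) : sgraph :=
  SGraph (@uadj_sym G1 G2) (@uadj_irr G1 G2).

From mathcomp Require Import all_boot zify.
Set Implicit Arguments. Unset Strict Implicit. Unset Printing Implicit Defensive.

(* Let G be r-Ramsey for K_n and let c be an r-colouring of G.  For every
   colour i that has a monochromatic K_n, fix one such clique A_i and label its
   vertices (i, 0), ..., (i, n - 1).  Recolour G: an edge between two labelled
   vertices gets the colour psi p q of their labels p, q; an edge between a
   vertex of A_i and an unlabelled vertex gets colour i; all other edges keep
   their colour.  Here psi is an r-colouring of the complete graph on r blocks
   of n vertices with no monochromatic K_n and no edge of colour i inside block
   i; it exists when n, r >= 3 (for n >= 4 colour edges between blocks by the
   smaller block and edges inside a block by comparing residues mod n - 2; for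
   n = 3 use an explicit colouring on the first three blocks).
   The recoloured graph has a monochromatic K_n, say of colour k.  It is not
   entirely labelled, since psi has no monochromatic K_n; an unlabelled vertex
   of it forces its labelled vertices to come from A_k, and the block condition
   allows at most one of those.  The other n - 1 vertices are unlabelled, so
   they span a K_(n-1) of colour k in c, disjoint from A_k (which exists, as
   the whole clique is of colour k in c when nothing is labelled). *)

Definition mono_embedding (H G : sgraph) r (c : edge_colouring G r) (k : 'I_r)
    (f : svert H -> svert G) : Prop :=
  injective f /\
  forall a b, sadj a b -> sadj (f a) (f b) /\ sval c (f a) (f b) = k.

Lemma mono_copy_unionl (H1 H2 G : sgraph) r (c : edge_colouring G r) :
  mono_copy (gunion H1 H2) c -> mono_copy H1 c.
Proof.
case=> k [f [f_inj f_mono]]; exists k, (f \o inl); split=> [a b /f_inj [] //|a b].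
exact: (f_mono (inl a) (inl b)).
Qed.

Lemma mono_embedding_union (H1 H2 G : sgraph) r (c : edge_colouring G r) k
    (f : svert H1 -> svert G) (g : svert H2 -> svert G) :
  mono_embedding c k f -> mono_embedding c k g -> (forall x y, f x != g y) ->
  mono_embedding (H := gunion H1 H2) c k
    (fun z => match z with inl x => f x | inr y => g y end).
Proof.
move=> [f_inj f_mono] [g_inj g_mono] fg; split=> [|[a|a] [b|b] //=].
- case=> [a|a] [b|b] /= => [/f_inj -> //|e|e|/g_inj -> //].
    by have := fg a b; rewrite e eqxx.
  by have := fg b a; rewrite e eqxx.
- exact: f_mono.
- exact: g_mono.
Qed.

Record block_pattern n r (psi : 'I_r * 'I_n -> 'I_r * 'I_n -> 'I_r) : Prop :=
  BlockPattern {
    pattern_sym : forall p q, psi p q = psi q p;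
    pattern_block : forall i t u, t != u -> psi (i, t) (i, u) != i;
    pattern_clique_free : forall k (h : 'I_n -> 'I_r * 'I_n), injective h ->
      ~ (forall a b, a != b -> psi (h a) (h b) = k) }.

Section Recolouring.

Variables (G : sgraph) (r n : nat) (c : edge_colouring G r).
Local Notation V := (svert G).

Definition mono_clique (k : 'I_r) (f : {ffun 'I_n -> V}) : bool :=
  injectiveb f && [forall a, forall b,
    (a != b) ==> sadj (f a) (f b) && (sval c (f a) (f b) == k)].

Lemma mono_cliqueP k (f : {ffun 'I_n -> V}) :
  reflect (mono_embedding (H := K n) c k f) (mono_clique k f).
Proof.
apply: (iffP andP) => [[/injectiveP f_inj /forallP f_mono]|[f_inj f_mono]].
  split=> // a b ab.
  by have /forallP/(_ b)/implyP/(_ ab)/andP[-> /eqP ->] := f_mono a.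
split; first exact/injectiveP.
apply/forallP=> a; apply/forallP=> b; apply/implyP=> ab.
by have [-> ->] := f_mono a b ab; rewrite eqxx.
Qed.

Definition chosen_clique k := [pick f | mono_clique k f].

Lemma chosen_cliqueP k (f : {ffun 'I_n -> V}) :
  chosen_clique k = Some f -> mono_embedding (H := K n) c k f.
Proof. by rewrite /chosen_clique; case: pickP => // f' /mono_cliqueP ? [<-]. Qed.

Lemma chosen_clique_exists k (g : 'I_n -> V) :
  mono_embedding (H := K n) c k g -> exists f, chosen_clique k = Some f.
Proof.
move=> [g_inj g_mono]; rewrite /chosen_clique.
case: pickP => [f _|none]; first by exists f.
suff : mono_clique k [ffun a => g a] by rewrite none.
apply/mono_cliqueP; split=> [a b|a b ab]; rewrite !ffunE; first exact: g_inj.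
exact: g_mono.
Qed.

Definition labelled (x : V) (p : 'I_r * 'I_n) : bool :=
  if chosen_clique p.1 is Some f then f p.2 == x else false.

Definition label x := [pick p | labelled x p].

Lemma labelP x p :
  label x = Some p -> exists2 f, chosen_clique p.1 = Some f & f p.2 = x.
Proof.
rewrite /label; case: pickP => // q; rewrite /labelled.
by case qf: (chosen_clique q.1) => [f|//] /eqP fq [<-]; exists f.
Qed.

Lemma label_inj x y p : label x = Some p -> label y = Some p -> x = y.
Proof.
by move=> /labelP [f fp <-] /labelP [f' f'p <-]; move: fp; rewrite f'p => -[->].
Qed.

Lemma label_chosen k (f : {ffun 'I_n -> V}) t :
  chosen_clique k = Some f -> label (f t) != None.
Proof.
move=> fk; rewrite /label; case: pickP => // /(_ (k, t)).
by rewrite /labelled /= fk eqxx.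
Qed.

Variable psi : 'I_r * 'I_n -> 'I_r * 'I_n -> 'I_r.
Hypothesis psiP : block_pattern psi.

Definition recolour x y : 'I_r :=
  match label x, label y with
  | Some p, Some q => psi p q
  | Some p, None => p.1
  | None, Some q => q.1
  | None, None => sval c x y
  end.

Lemma recolour_sym x y : recolour x y = recolour y x.
Proof.
rewrite /recolour; case: (label x) => [p|]; case: (label y) => [q|] //.
  exact: (pattern_sym psiP).
exact: (svalP c).
Qed.

Definition recolouring : edge_colouring G r := exist _ recolour recolour_sym.

Section RecolouredClique.

Variables (k : 'I_r) (g : 'I_n -> V).
Hypothesis g_mono : mono_embedding (H := K n) recolouring k g.

Lemma recoloured_clique_unlabelled : exists a, label (g a) = None.
Proof.
case: (pickP [pred a | label (g a) == None]) => [a /eqP|all_labelled].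
  by exists a.
pose h a := odflt (k, a) (label (g a)).
have hE a : label (g a) = Some (h a).
  by rewrite /h; move: (all_labelled a) => /=; case: (label (g a)).
exfalso; case: g_mono => g_inj g_col.
apply: (pattern_clique_free psiP (k := k) (h := h)).
  by move=> a b hab; apply/g_inj/(label_inj (hE a)); rewrite hab hE.
by move=> a b ab; have [_ <-] := g_col a b ab; rewrite /= /recolour !hE.
Qed.

Lemma recoloured_clique_label_colour b p : label (g b) = Some p -> p.1 = k.
Proof.
move=> gb; have [a ga] := recoloured_clique_unlabelled.
have ab : a != b by apply: contraTneq isT => ab; move: ga; rewrite ab gb.
by have [_ <-] := g_mono.2 a b ab; rewrite /= /recolour ga gb.
Qed.

Lemma recoloured_clique_label_uniq a b p q :
  label (g a) = Some p -> label (g b) = Some q -> a = b.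
Proof.
move=> ga gb; case: (eqVneq a b) => // ab; exfalso.
have pk := recoloured_clique_label_colour ga.
have qk := recoloured_clique_label_colour gb.
have pq : p.2 != q.2.
  apply: contra ab => /eqP p2q2; apply/eqP/g_mono.1/(label_inj ga).
  by rewrite gb; case: p q pk qk p2q2 {ga gb} => [? ?] [? ?] /= -> -> ->.
have [_] := g_mono.2 a b ab; rewrite /= /recolour ga gb.
case: p q pk qk pq {ga gb} => [i t] [j u] /= -> -> tu /eqP.
exact/negP/(pattern_block psiP).
Qed.

Lemma recoloured_clique_chosen : exists f, chosen_clique k = Some f.
Proof.
case: (pickP [pred b | label (g b) != None]) => [b /=|unlabelled].
  case gb: (label (g b)) => [p|//] _; have [f fp _] := labelP gb.
  by exists f; rewrite -(recoloured_clique_label_colour gb).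
apply: (chosen_clique_exists (g := g)); split=> [|a b ab]; first exact: g_mono.1.
have [gab] := g_mono.2 a b ab; rewrite /= /recolour.
by move: (unlabelled a) (unlabelled b) => /= /negbFE/eqP -> /negbFE/eqP ->.
Qed.

Lemma recoloured_clique_almost_unlabelled :
  exists b0, forall a, a != b0 -> label (g a) = None.
Proof.
case: (pickP [pred b | label (g b) != None]) => [b0 /=|unlabelled].
  case gb0: (label (g b0)) => [p|//] _; exists b0 => a ab0.
  case ga: (label (g a)) => [q|//]; move: ab0.
  by rewrite (recoloured_clique_label_uniq ga gb0) eqxx.
have [a0 _] := recoloured_clique_unlabelled.
by exists a0 => a _; apply/eqP/negbFE/unlabelled.
Qed.

Lemma recoloured_clique_union : mono_copy (gunion (K n) (K n.-1)) c.
Proof.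
have [b0 others] := recoloured_clique_almost_unlabelled.
have unlabelled s : label (g (lift b0 s)) = None.
  by rewrite others // eq_sym neq_lift.
have [f fk] := recoloured_clique_chosen.
have g'_mono : mono_embedding (H := K n.-1) c k (g \o lift b0).
  split=> [a b /g_mono.1 /lift_inj //|a b ab].
  have ab' : lift b0 a != lift b0 b by rewrite (inj_eq (@lift_inj _ b0)).
  by have := g_mono.2 _ _ ab'; rewrite /= /recolour !unlabelled.
have fg t s : f t != g (lift b0 s).
  by apply: contraNneq (label_chosen t fk) => ->; rewrite unlabelled.
by exists k; eexists; exact: mono_embedding_union (chosen_cliqueP fk) g'_mono fg.
Qed.

End RecolouredClique.

Lemma ramsey_union_of_pattern :
  ramsey G (K n) r -> mono_copy (gunion (K n) (K n.-1)) c.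
Proof. by move=> /(_ recolouring) [k [g /recoloured_clique_union]]. Qed.

End Recolouring.

Lemma clique_free_of_rank n (T : eqType) (C : Type) (col : T -> T -> C)
    (rank : C -> T -> nat) k (h : 'I_n -> T) :
  0 < n -> (forall x, rank k x < n.-1) ->
  (forall x y, x != y -> col x y = k -> rank k x != rank k y) ->
  injective h -> ~ (forall a b, a != b -> col (h a) (h b) = k).
Proof.
move=> n_gt0 rank_lt rank_sep h_inj h_mono.
pose f a : 'I_n.-1 := Ordinal (rank_lt (h a)).
have f_inj : injective f.
  move=> a b /(congr1 val) /= /eqP; case: (eqVneq a b) => // ab.
  by rewrite (negbTE (rank_sep _ _ _ (h_mono a b ab))) // (inj_eq h_inj).
by have := leq_card f f_inj; rewrite !card_ord; lia.
Qed.

Definition nat_pattern r n (col : nat -> nat -> nat -> nat -> nat) :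
    'I_r.+3 * 'I_n -> 'I_r.+3 * 'I_n -> 'I_r.+3 :=
  fun p q => inord (col p.1 p.2 q.1 q.2).

Lemma block_pattern_nat r n (col : nat -> nat -> nat -> nat -> nat) :
  (forall i t j u, col i t j u = col j u i t) ->
  (forall i t j u, i < r.+3 -> j < r.+3 -> col i t j u < r.+3) ->
  (forall i t u, t != u -> col i t i u != i) ->
  (forall k (h : 'I_n -> 'I_r.+3 * 'I_n), injective h ->
     ~ (forall a b, a != b -> col (h a).1 (h a).2 (h b).1 (h b).2 = k)) ->
  block_pattern (@nat_pattern r n col).
Proof.
move=> col_sym col_lt col_block col_free.
have colE (p q : 'I_r.+3 * 'I_n) :
    val (@nat_pattern r n col p q) = col p.1 p.2 q.1 q.2.
  by rewrite /nat_pattern /= inordK // col_lt.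
split=> [p q|i t u tu|k h h_inj h_mono].
- by apply: val_inj; rewrite !colE col_sym.
- by rewrite -val_eqE colE col_block.
- by apply: (col_free k h h_inj) => a b ab; rewrite -colE h_mono.
Qed.

Lemma pair_neq a b (x y : 'I_a * 'I_b) :
  x != y -> (val x.1 != val y.1) || (val x.2 != val y.2).
Proof. by case: x y => [i t] [j u]; rewrite xpair_eqE negb_and. Qed.

Definition alt_colour1 i := if i == 0 then 1 else 0.
Definition alt_colour2 i := if i == 2 then 1 else 2.

Definition grid_colour n (i t j u : nat) : nat :=
  if i != j then minn i j
  else if t %% (n - 2) != u %% (n - 2) then alt_colour1 i else alt_colour2 i.

(* Distinct ends of an edge of colour k get distinct ranks, and there are only
   n - 1 ranks: a pigeonhole bound on cliques of colour k. *)
Definition grid_rank n (k i t : nat) : nat :=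
  if k == i then 0
  else if k == alt_colour1 i then (t %% (n - 2)).+1
  else if k == alt_colour2 i then (t %/ (n - 2)).+1
  else 1.

Lemma alt_colours_neq i :
  [/\ alt_colour1 i != i, alt_colour2 i != i & alt_colour2 i != alt_colour1 i].
Proof. by rewrite /alt_colour1 /alt_colour2; case: i => [|[|[|]]]. Qed.

Lemma grid_rank_lt n k i t : 4 <= n -> t < n -> grid_rank n k i t < n.-1.
Proof.
move=> n_ge4 t_lt; have := ltn_pmod t (_ : 0 < n - 2).
have : t %/ (n - 2) <= 1 by rewrite -ltnS ltn_divLR; lia.
by rewrite /grid_rank; case: ifP => _; [|case: ifP => _; [|case: ifP]]; lia.
Qed.

Lemma grid_rank_eq0 n k i t : (grid_rank n k i t == 0) = (k == i).
Proof. by rewrite /grid_rank; case: ifP => // _; do 2?case: ifP. Qed.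

Lemma grid_rank_sep n k i t j u :
  (i != j) || (t != u) -> grid_colour n i t j u = k ->
  grid_rank n k i t != grid_rank n k j u.
Proof.
rewrite /grid_colour; case: (eqVneq i j) => [<-{j} /= tu|ij /= _ <-].
  have [ne1 ne2 ne21] := alt_colours_neq i.
  rewrite /grid_rank; case: eqP => [eq_mod|/eqP neq_mod] <-.
    rewrite (negbTE ne2) (negbTE ne21) eqxx eqSS.
    apply: contra tu => /eqP eq_div.
    by rewrite (divn_eq t (n - 2)) (divn_eq u (n - 2)) eq_div eq_mod.
  by rewrite (negbTE ne1) eqxx eqSS.
apply/eqP => eq_rank.
have := grid_rank_eq0 n (minn i j) i t; rewrite eq_rank grid_rank_eq0.
case: leqP => _; rewrite eqxx; [|move/esym]; move/eqP=> eq_ij;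
  by move: ij; rewrite eq_ij eqxx.
Qed.

Lemma grid_pattern n r :
  4 <= n -> block_pattern (@nat_pattern r n (grid_colour n)).
Proof.
move=> n_ge4.
apply: block_pattern_nat => [i t j u|i t j u ir jr|i t u _|k h h_inj].
- rewrite /grid_colour eq_sym minnC; case: (eqVneq j i) => [->|//] /=.
  by rewrite eq_sym.
- rewrite /grid_colour /alt_colour1 /alt_colour2; case: ifP => _; first lia.
  by do 2!case: ifP.
- by rewrite /grid_colour eqxx /=; have [? ? _] := alt_colours_neq i; case: ifP.
apply: (@clique_free_of_rank n _ _
  (fun x y : 'I_r.+3 * 'I_n => grid_colour n x.1 x.2 y.1 y.2)
  (fun k x => grid_rank n k x.1 x.2)) => //.
- lia.
- by move=> x; apply: grid_rank_lt.
- by move=> x y /pair_neq; apply: grid_rank_sep.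
Qed.

(* On blocks 0, 1, 2 this is just one of many 3-colourings of K_9 that have no
   monochromatic triangle and no colour-i edge inside block i; it is checked
   exhaustively in triangle_colour_free_small. *)
Definition triangle_colour (i t j u : nat) : nat :=
  if i == j then (if t + u < 3 then i + 2 else i + 1) %% 3
  else if (i < 3) && (j < 3) then
    (i * j + i * t + j * u + 2 * (i * u + j * t)) %% 3
  else maxn i j.

Lemma triangle_colour_free_small i1 t1 i2 t2 i3 t3 :
  i1 < 3 -> t1 < 3 -> i2 < 3 -> t2 < 3 -> i3 < 3 -> t3 < 3 ->
  (i1 != i2) || (t1 != t2) -> (i1 != i3) || (t1 != t3) ->
  (i2 != i3) || (t2 != t3) ->
  triangle_colour i1 t1 i2 t2 = triangle_colour i1 t1 i3 t3 ->
  triangle_colour i1 t1 i2 t2 = triangle_colour i2 t2 i3 t3 -> False.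
Proof.
by case: i1 => [|[|[|?]]] //; case: t1 => [|[|[|?]]] //;
  case: i2 => [|[|[|?]]] //; case: t2 => [|[|[|?]]] //;
  case: i3 => [|[|[|?]]] //; case: t3 => [|[|[|?]]].
Qed.

Lemma triangle_colour_free_block i t1 t2 t3 :
  t1 < 3 -> t2 < 3 -> t3 < 3 -> t1 != t2 -> t1 != t3 -> t2 != t3 ->
  triangle_colour i t1 i t2 = triangle_colour i t1 i t3 ->
  triangle_colour i t1 i t2 = triangle_colour i t2 i t3 -> False.
Proof.
rewrite /triangle_colour eqxx.
by case: t1 => [|[|[|?]]] //; case: t2 => [|[|[|?]]] //;
  case: t3 => [|[|[|?]]] //=; lia.
Qed.

Lemma triangle_colour_spec i t j u :
  (triangle_colour i t j u < 3 /\ (i = j \/ i < 3 /\ j < 3)) \/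
  i != j /\ 3 <= maxn i j /\ triangle_colour i t j u = maxn i j.
Proof.
rewrite /triangle_colour; case: (eqVneq i j) => [->|ij /=].
  by left; rewrite ltn_mod; split; [|left].
case: ifP => [/andP[? ?]|small]; first by left; rewrite ltn_mod; split; [|right].
right; do 2!split=> //.
by move/negbT: small; rewrite negb_and -!leqNgt; lia.
Qed.

Lemma triangle_colour_free i1 t1 i2 t2 i3 t3 :
  t1 < 3 -> t2 < 3 -> t3 < 3 ->
  (i1 != i2) || (t1 != t2) -> (i1 != i3) || (t1 != t3) ->
  (i2 != i3) || (t2 != t3) ->
  triangle_colour i1 t1 i2 t2 = triangle_colour i1 t1 i3 t3 ->
  triangle_colour i1 t1 i2 t2 = triangle_colour i2 t2 i3 t3 -> False.
Proof.
move=> t1_lt t2_lt t3_lt d12 d13 d23.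
case: (boolP [&& i1 < 3, i2 < 3 & i3 < 3]) => [/and3P[? ? ?]|not_small].
  exact: triangle_colour_free_small.
case: (boolP ((i1 == i2) && (i1 == i3))) => [/andP[/eqP eq12 /eqP eq13]|?].
  move: d12 d13 d23; rewrite -eq12 -eq13 eqxx /= => d12 d13 d23.
  exact: triangle_colour_free_block.
have := triangle_colour_spec i1 t1 i2 t2.
have := triangle_colour_spec i1 t1 i3 t3.
have := triangle_colour_spec i2 t2 i3 t3.
by do 3![case=> [[? ?]|[? [? ?]]]]; lia.
Qed.

Lemma triangle_pattern r : block_pattern (@nat_pattern r 3 triangle_colour).
Proof.
apply: block_pattern_nat => [i t j u|i t j u ir jr|i t u _|k h h_inj h_mono].
- rewrite /triangle_colour eq_sym andbC maxnC; case: eqP => [->|_].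
    by rewrite addnC.
  by congr (if _ then _ %% 3 else _); lia.
- have mod3_lt x : x %% 3 < r.+3 by rewrite (leq_trans (ltn_pmod _ _)).
  rewrite /triangle_colour; case: ifP => _ //.
  by case: ifP => _ //; rewrite gtn_max ir jr.
- rewrite /triangle_colour eqxx; case: ifP => _; lia.
have d (a b : 'I_3) :
    a != b -> (val (h a).1 != val (h b).1) || (val (h a).2 != val (h b).2).
  by move=> ab; apply: pair_neq; rewrite (inj_eq h_inj).
pose o i : 'I_3 := inord i.
apply: (@triangle_colour_free (h (o 0)).1 (h (o 0)).2 (h (o 1)).1 (h (o 1)).2
  (h (o 2)).1 (h (o 2)).2); rewrite ?d ?h_mono //.
all: by rewrite -val_eqE /= !inordK.
Qed.

Lemma block_pattern_exists n r : 3 <= n -> 3 <= r ->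
  exists psi : 'I_r * 'I_n -> 'I_r * 'I_n -> 'I_r, block_pattern psi.
Proof.
move=> n_ge3; case: r => [|[|[|r]]] // _.
move: n_ge3; rewrite leq_eqVlt => /orP[/eqP <-|n_ge4].
  by exists (@nat_pattern r 3 triangle_colour); apply: triangle_pattern.
by exists (@nat_pattern r n (grid_colour n)); apply: grid_pattern.
Qed.

Unset Implicit Arguments.

Theorem mainTheorem1 (n r : nat) (hn : 3 <= n) (hr : 3 <= r) :
  ramsey_equiv (K n) (gunion (K n) (K n.-1)) r.
Proof.
have [psi psiP] := block_pattern_exists hn hr.
move=> G; split=> G_ramsey c; first exact: ramsey_union_of_pattern psiP G_ramsey.
exact: mono_copy_unionl (G_ramsey c).
Qed.
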